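(* Let $\mathbb P$ be the law of a stationary simple point process on $\mathbb R^d$ with finite positive intensity $m$. For every $\gamma>0$, $L\in\mathbb N$ and $z\in\mathbb R^d$, $$\mathbb E_0\big[\xi(\Lambda_L(z))^\gamma\big]\le\frac1m(2L+2)^{d\gamma}\rho_{1+\gamma}.$$
   Context: $\mathcal N$ = locally finite subsets of $\mathbb R^d$, identified with counting measures ($\xi(A)=\#(\xi\cap A)$); $\tau_x\xi=\xi-x$; stationarity: $\mathbb P(\tau_xA)=\mathbb P(A)$. Intensity $m=\mathbb E[\xi([0,1]^d)]$. $\Lambda_L(z)=z+[-L,L]^d$. $\rho_\gamma:=\mathbb E[\xi([0,1]^d)^\gamma]$ (possibly $+\infty$). The Palm distribution is $\mathbb P_0(A)=\frac1m\int d\mathbb P(\xi)\sum_{x\in\xi\cap[0,1]^d}\mathbf 1_A(\tau_x\xi)$, with expectation $\mathbb E_0$. $\mathbb N=\{0,1,2,\dots\}$. *)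

From HB Require Import structures.
From mathcomp Require Import all_boot all_order all_algebra.
From mathcomp Require Import all_classical all_reals all_analysis.
Set Implicit Arguments. Unset Strict Implicit. Unset Printing Implicit Defensive.
Import Order.TTheory GRing.Theory Num.Theory.
Local Open Scope classical_set_scope.
Local Open Scope ring_scope.

(* Points of R^d are d-tuples of reals; d.-tuple R carries the product
   (= Borel) sigma-algebra of mathcomp-analysis. *)
Definition pt (R : realType) (d : nat) := (d.-tuple R)%type.

Definition addp (R : realType) (d : nat) (x y : pt R d) : pt R d :=
  [tuple tnth x i + tnth y i | i < d].
Definition subp (R : realType) (d : nat) (x y : pt R d) : pt R d :=
  [tuple tnth x i - tnth y i | i < d].

Definition boundedp (R : realType) (d : nat) (B : set (pt R d)) : Prop :=
  exists r : R, forall x, B x -> forall i, `|tnth x i| <= r.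

Definition locfin (R : realType) (d : nat) (S : set (pt R d)) : Prop :=
  forall B, boundedp B -> finite_set (S `&` B).

Record config (R : realType) (d : nat) := Config {
  cpts : set (pt R d) ;
  cpts_lf : locfin cpts }.

Lemma locfin0 (R : realType) (d : nat) : locfin (@set0 (pt R d)).
Proof. by move=> B _; rewrite set0I; exact: finite_set0. Qed.

HB.instance Definition _ (R : realType) (d : nat) := gen_eqMixin (config R d).
HB.instance Definition _ (R : realType) (d : nat) := gen_choiceMixin (config R d).
HB.instance Definition _ (R : realType) (d : nat) :=
  isPointed.Build (config R d) (Config (@locfin0 R d)).

Definition npts (R : realType) (d : nat) (xi : config R d) (A : set (pt R d))
  : \bar R := (\esum_(x in cpts xi `&` A) 1)%E.

Lemma locfin_shift (R : realType) (d : nat) (S : set (pt R d)) (x : pt R d) :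
  locfin S -> locfin [set subp y x | y in S].
Proof.
move=> hS B [r hr].
pose B' := [set y | B (subp y x)].
have bB' : boundedp B'.
  exists (r + \sum_(j < d) `|tnth x j|) => y /hr Hy i.
  have := Hy i; rewrite /subp tnth_mktuple => h.
  have -> : tnth y i = (tnth y i - tnth x i) + tnth x i by rewrite subrK.
  apply: (le_trans (ler_normD _ _)); apply: lerD => //.
  rewrite (bigD1 i) //= lerDl; exact: sumr_ge0.
apply: (@sub_finite_set _ _ ((fun y => subp y x) @` (S `&` B'))).
  by move=> _ [[y Sy <-] By]; exists y.
exact/finite_image/hS.
Qed.

Definition shift (R : realType) (d : nat) (x : pt R d) (xi : config R d)
  : config R d := Config (locfin_shift x (cpts_lf xi)).

(* the sigma-algebra on N generated by the counting maps xi |-> xi(B),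
   B bounded Borel *)
Definition count_events (R : realType) (d : nat) : set (set (config R d)) :=
  [set E | exists (B : set (pt R d)) (n : nat),
     [/\ measurable B, boundedp B & E = [set xi | npts xi B = n%:R%:E]]].

Definition configT (R : realType) (d : nat) :=
  g_sigma_algebraType (@count_events R d).

Definition cube01 (R : realType) (d : nat) : set (pt R d) :=
  [set y | forall i, 0 <= tnth y i <= 1].
Definition Lambda (R : realType) (d : nat) (L : nat) (z : pt R d) : set (pt R d) :=
  [set y | forall i, tnth z i - L%:R <= tnth y i <= tnth z i + L%:R].

Definition stationary (R : realType) (d : nat) (P : probability (configT R d) R) :=
  forall (x : pt R d) (A : set (configT R d)), measurable A ->
    P ((shift x) @` A) = P A.

Definition rho (R : realType) (d : nat) (P : probability (configT R d) R) (g : R)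
  : \bar R := (\int[P]_xi (npts xi (@cube01 R d) `^ g))%E.

(* Palm expectation of a nonnegative functional f, i.e. the integral of f
   against P_0(A) = 1/m \int dP(xi) sum_{x in xi \cap [0,1]^d} 1_A(tau_x xi) *)
Definition palmE (R : realType) (d : nat) (P : probability (configT R d) R) (m : R)
  (f : config R d -> \bar R) : \bar R :=
  ((m^-1)%:E * \int[P]_xi (\esum_(x in cpts xi `&` @cube01 R d) f (shift x xi)))%E.

From Pilot Require Import Defs.
From HB Require Import structures.
From mathcomp Require Import all_boot all_order all_algebra.
From mathcomp Require Import all_classical all_reals all_analysis.
From mathcomp Require Import finmap lra ring measurable_realfun.
Set Implicit Arguments.
Unset Strict Implicit.
Unset Printing Implicit Defensive.
Import Order.TTheory GRing.Theory Num.Theory.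
Local Open Scope classical_set_scope.
Local Open Scope ring_scope.

Local Notation grid d L := {ffun 'I_d -> 'I_(2 * L).+1}.

(* For a point x of xi in [0,1]^d, the window Lambda_L(z) + x lies in
   z + [-L, L+1]^d, which is covered by the N = (2L+1)^d unit boxes B_k of a
   grid.  So the Palm sum is at most a * s^gamma, where a = xi([0,1]^d) and
   s = sum_k xi(B_k).  Young's inequality (exponents 1+gamma and
   (1+gamma)/gamma) and the power-mean inequality bound this by
   N^gamma/(1+gamma) * (a^(1+gamma) + gamma/N * sum_k xi(B_k)^(1+gamma)).
   By stationarity every xi(B_k) has the law of a, so the expectation is
   N^gamma * rho_(1+gamma), and N^gamma <= (2L+2)^(d gamma). *)

Section power_mean.
Context {R : realType}.

Lemma young_powR (a b g : R) : 0 <= a -> 0 <= b -> 0 < g ->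
  a * b `^ g <= a `^ (1 + g) / (1 + g) + b `^ (1 + g) * (g / (1 + g)).
Proof.
move=> a0 b0 g0.
have p0 : 0 < 1 + g by lra.
have pq : (1 + g)^-1 + ((1 + g) / g)^-1 = 1.
  by rewrite invf_div; field; rewrite gt_eqF.
have := conjugate_powR a0 (powR_ge0 b g) p0 (divr_gt0 p0 g0) pq.
rewrite -powRrM.
have -> : g * ((1 + g) / g) = 1 + g by rewrite mulrC divfK ?gt_eqF.
by rewrite invf_div.
Qed.

Lemma powR_mean_le (K : finType) (s : K -> R) (g : R) :
  (0 < #|K|)%N -> (forall k, 0 <= s k) -> 0 < g ->
  ((\sum_k s k) / #|K|%:R) `^ (1 + g) <= (\sum_k s k `^ (1 + g)) / #|K|%:R.
Proof.
move=> K0 s0 g0; set N : R := #|K|%:R; set c := (\sum_k s k) / N.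
have N0 : 0 < N by rewrite ltr0n.
have c0 : 0 <= c by rewrite divr_ge0 ?sumr_ge0 ?ltW.
have p0 : 0 < 1 + g by lra.
have cpow : c * c `^ g = c `^ (1 + g) by rewrite powRD ?powRr1 // gt_eqF.
have young_sum : c `^ (1 + g) * N <=
    (\sum_k s k `^ (1 + g)) / (1 + g) + c `^ (1 + g) * (g / (1 + g)) * N.
  have : \sum_k s k * c `^ g <=
      \sum_k (s k `^ (1 + g) / (1 + g) + c `^ (1 + g) * (g / (1 + g))).
    by apply: ler_sum => k _; exact: young_powR.
  rewrite -mulr_suml big_split /= -mulr_suml sumr_const -mulr_natr -/N.
  by rewrite -[\sum_k s k](divfK (lt0r_neq0 N0)) -/c mulrAC cpow.
rewrite ler_pdivlMr //.
have := ler_wpM2r (ltW p0) young_sum.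
have -> : ((\sum_k s k `^ (1 + g)) / (1 + g) + c `^ (1 + g) * (g / (1 + g)) * N)
    * (1 + g) = \sum_k s k `^ (1 + g) + c `^ (1 + g) * N * g.
  by field; rewrite gt_eqF.
nra.
Qed.

Lemma mul_powR_sum_le (K : finType) (a g : R) (s : K -> R) :
  (0 < #|K|)%N -> 0 <= a -> (forall k, 0 <= s k) -> 0 < g ->
  a * (\sum_k s k) `^ g <=
  #|K|%:R `^ g / (1 + g) * (a `^ (1 + g) + g / #|K|%:R * \sum_k s k `^ (1 + g)).
Proof.
move=> K0 a0 s0 g0; set N : R := #|K|%:R; set c := (\sum_k s k) / N.
have N0 : 0 < N by rewrite ltr0n.
have p0 : 0 < 1 + g by lra.
have c0 : 0 <= c by rewrite divr_ge0 ?sumr_ge0 ?ltW.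
have -> : N `^ g / (1 + g) * (a `^ (1 + g) + g / N * \sum_k s k `^ (1 + g)) =
    N `^ g * (a `^ (1 + g) / (1 + g) + (\sum_k s k `^ (1 + g)) / N * (g / (1 + g))).
  by field; rewrite !gt_eqF.
rewrite -[\sum_k s k](divfK (lt0r_neq0 N0)) -/c powRM ?(ltW N0) //.
rewrite [c `^ g * _]mulrC mulrCA ler_wpM2l ?powR_ge0 //.
apply: le_trans (young_powR a0 c0 g0) _.
rewrite lerD2l ler_wpM2r ?divr_ge0 ?(ltW g0) ?(ltW p0) //.
exact: powR_mean_le.
Qed.

End power_mean.

(* The Palm sum need not be measurable; for nonnegative integrands the
   integral is a supremum over simple minorants, hence monotone anyway. *)
Lemma ge0_le_integral_nonmeasurable (R : realType) dT (T : measurableType dT)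
    (mu : {measure set T -> \bar R}) (f g : T -> \bar R) :
  (forall x, 0 <= f x)%E -> (forall x, f x <= g x)%E ->
  (\int[mu]_x f x <= \int[mu]_x g x)%E.
Proof.
move=> f0 fg; have g0 x : (0 <= g x)%E by apply: le_trans (fg x).
rewrite !ge0_integralTE //; apply: ge_ereal_sup => _ [h hf <-].
by apply: ereal_sup_ubound; exists h => // x; exact: le_trans (hf x) (fg x).
Qed.

Lemma esum_cst (R : realType) (T : choiceType) (S : set T) (r : \bar R) :
  finite_set S -> (0 <= r)%E -> (\esum_(x in S) r = (\esum_(x in S) 1) * r)%E.
Proof.
move=> finS r0; rewrite !esum_fset // !fsbig_finite //= ge0_sume_distrl //.
by apply: eq_bigr => x _; rewrite mul1e.
Qed.

Section counting.
Context {R : realType} {d : nat}.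
Local Notation pt := (pt R d).
Local Notation config := (config R d).
Implicit Types (xi : config) (A B : set pt) (x : pt).

Definition count_pts xi A : nat := #|` fset_set (cpts xi `&` A)|%fset.

Lemma npts_count xi A : boundedp A -> npts xi A = (count_pts xi A)%:R%:E.
Proof. by move=> bA; rewrite /npts finite_card_sum //; exact: cpts_lf. Qed.

Lemma npts_ge0 xi A : (0 <= npts xi A)%E.
Proof. exact: esum_ge0. Qed.

Lemma le_npts xi A B : A `<=` B -> (npts xi A <= npts xi B)%E.
Proof.
move=> AB; rewrite /npts !esum_mkcondr; apply: le_esum => x _.
case: ifPn => [/set_mem/AB/mem_set ->//|_]; by case: ifP.
Qed.

Lemma npts_le_sum_cover (K : finType) (Q : K -> set pt) xi A :
  A `<=` \bigcup_k Q k -> (npts xi A <= \sum_k npts xi (Q k))%E.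
Proof.
move=> AQ; rewrite /npts esum_mkcondr.
under eq_bigr do rewrite esum_mkcondr.
rewrite -esum_sum; last by move=> x k _ _; case: ifP.
apply: le_esum => x _; case: ifPn => [/set_mem/AQ [k _ Qk]|_]; last first.
  by apply: sume_ge0 => k _; case: ifP.
rewrite (bigD1 k) //= ifT; last exact/mem_set.
by apply: leeDl; apply: sume_ge0 => j _; case: ifP.
Qed.

Lemma subp_inj x : injective (fun y => subp y x).
Proof.
move=> y1 y2 e; apply: eq_from_tnth => i.
by have := congr1 (fun t => tnth t i) e; rewrite /subp !tnth_mktuple => /addIr.
Qed.

Lemma npts_shift x xi B : npts (Defs.shift x xi) B = npts xi [set y | B (subp y x)].
Proof.
rewrite /npts.
have -> : cpts (Defs.shift x xi) `&` B =
    (fun y => subp y x) @` (cpts xi `&` [set y | B (subp y x)]).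
  apply/seteqP; split; first by move=> _ [[y xiy <-] By]; exists y.
  by move=> _ [y [xiy By] <-]; split => //; exists y.
exact: esum_image (in2W (@subp_inj x)).
Qed.

End counting.

Section boxes_and_shifts.
Context {R : realType} {d : nat}.
Local Notation pt := (pt R d).
Implicit Types (a x : pt).

Definition box a : set pt :=
  [set y | forall i, tnth a i <= tnth y i <= tnth a i + 1].

Definition origin : pt := [tuple 0 | _ < d].

Definition oppp x : pt := [tuple - tnth x i | i < d].

Lemma cube01_box : @cube01 R d = box origin.
Proof.
by apply/seteqP; split => y /= h i; have := h i; rewrite tnth_mktuple add0r.
Qed.

Lemma preimage_subp_box a x : [set y | box a (subp y x)] = box (addp a x).
Proof.
apply/seteqP; split => y /= h i; have := h i;
  rewrite /subp /addp !tnth_mktuple => /andP[h1 h2]; apply/andP; split; lra.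
Qed.

Lemma add0p x : addp origin x = x.
Proof. by apply: eq_from_tnth => i; rewrite !tnth_mktuple add0r. Qed.

Lemma addpN x : addp x (oppp x) = origin.
Proof. by apply: eq_from_tnth => i; rewrite !tnth_mktuple subrr. Qed.

Lemma box_bounded a : boundedp (box a).
Proof.
exists (\sum_i (`|tnth a i| + 1)) => y hy i.
have /andP[h1 h2] := hy i.
apply: (@le_trans _ _ (`|tnth a i| + 1)).
  have := ler_norm (tnth a i); have := ler_norm (- tnth a i); rewrite normrN.
  by rewrite ler_norml => ? ?; apply/andP; split; lra.
by rewrite (bigD1 i) //= lerDl; apply: sumr_ge0 => j _; apply: addr_ge0.
Qed.

Lemma box_measurable a : measurable (box a).
Proof.
have -> : box a = \bigcap_(i in [set: 'I_d])
    ((fun y : pt => tnth y i) @^-1` `[tnth a i, tnth a i + 1]%classic).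
  apply/seteqP; split => y /=; first by move=> h i _ /=; rewrite in_itv /=.
  by move=> h i; have := h i I; rewrite /= in_itv.
apply: fin_bigcap_measurable; first exact: finite_finset.
move=> i _; rewrite -[X in measurable X]setTI.
exact: (measurable_tnth i measurableT (measurable_itv _)).
Qed.

Lemma measurable_npts (B : set pt) : measurable B -> boundedp B ->
  measurable_fun [set: configT R d] (fun xi : configT R d => npts xi B).
Proof.
move=> mB bB _ U mU; rewrite setTI.
have -> : (fun xi : configT R d => npts xi B) @^-1` U =
    \bigcup_(n in [set n : nat | U n%:R%:E]) [set xi | npts xi B = n%:R%:E].
  apply/seteqP; split => xi /=; last by move=> [n Un /= ->].
  by move=> Uxi; exists (count_pts xi B); rewrite /= -?npts_count.
apply: bigcup_measurable => n _.
by apply: sub_sigma_algebra; exists B, n.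
Qed.

Lemma cube01_measurable : measurable (@cube01 R d).
Proof. by rewrite cube01_box; exact: box_measurable. Qed.

Lemma cube01_bounded : boundedp (@cube01 R d).
Proof. by rewrite cube01_box; exact: box_bounded. Qed.

Lemma config_eq (xi eta : config R d) : cpts xi = cpts eta -> xi = eta.
Proof.
case: xi eta => [S hS] [S' hS'] /= SS'; subst S'.
by congr Config; exact: Prop_irrelevance.
Qed.

Lemma shiftK x : cancel (Defs.shift x) (Defs.shift (oppp x)).
Proof.
have subpK y : subp (subp y x) (oppp x) = y.
  by apply: eq_from_tnth => i; rewrite !tnth_mktuple opprK subrK.
move=> xi; apply: config_eq => /=; apply/seteqP; split.
  by move=> _ [_ [y xiy <-] <-]; rewrite subpK.
by move=> y xiy; exists (subp y x); [exists y | rewrite subpK].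
Qed.

End boxes_and_shifts.

Section grid.
Context {R : realType} {d : nat}.
Local Notation pt := (pt R d).

(* The [minn] puts the endpoint t = n + 1 into the last cell. *)
Definition grid_index (n : nat) (t : R) : 'I_n.+1 := inord (minn (Num.truncn t) n).

Lemma grid_indexP n (t : R) : 0 <= t <= n%:R + 1 ->
  (grid_index n t)%:R <= t <= (grid_index n t)%:R + 1.
Proof.
case/andP=> t0 tn; rewrite /grid_index inordK ?ltnS ?geq_minr //.
have /andP[tr1 tr2] := truncn_itv t0.
case: leqP => [_|]; first by rewrite tr1 /=; rewrite -natr1 in tr2; lra.
by rewrite truncn_gt_nat -natr1 => n_tr; apply/andP; split; lra.
Qed.

Definition grid_corner (L : nat) (z : pt) (k : grid d L) : pt :=
  [tuple tnth z i - L%:R + (k i)%:R | i < d].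

Lemma Lambda_shift_sub_grid L z (x : pt) : cube01 x ->
  [set y | Lambda L z (subp y x)] `<=`
  \bigcup_(k : grid d L) box (grid_corner z k).
Proof.
move=> x01 y yL.
pose t i := tnth y i - tnth z i + L%:R.
have t_range i : 0 <= t i <= (2 * L)%:R + 1.
  have := yL i; have := x01 i; rewrite /subp tnth_mktuple natrM /t.
  by move=> /andP[? ?] /andP[? ?]; apply/andP; split; lra.
exists [ffun i => grid_index (2 * L) (t i)] => // i.
have := grid_indexP (t_range i); rewrite /t tnth_mktuple ffunE.
by move=> /andP[? ?]; apply/andP; split; lra.
Qed.

Lemma card_grid_powR_le L (g : R) : 0 <= g ->
  #|grid d L|%:R `^ g <= (2 * L%:R + 2) `^ (d%:R * g).
Proof.
move=> g0; rewrite card_ffun !card_ord natrX -powR_mulrn ?ler0n // -powRrM.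
apply: ge0_ler_powR; rewrite ?nnegrE ?mulr_ge0 ?ler0n //.
by rewrite -natr1 natrM; lra.
Qed.

End grid.

Section stationarity.
Context {R : realType} {d : nat} (P : probability (configT R d) R).
Hypothesis Pstat : stationary P.

Lemma stationary_npts_box (a : pt R d) (U : set (\bar R)) : measurable U ->
  P ((fun xi : configT R d => npts xi (box a)) @^-1` U) =
  P ((fun xi : configT R d => npts xi (@cube01 R d)) @^-1` U).
Proof.
move=> mU; rewrite -[RHS](Pstat (oppp a)); last first.
  rewrite -[X in measurable X]setTI.
  exact: measurable_npts cube01_measurable cube01_bounded measurableT U mU.
apply: congr1; apply/seteqP; split => xi /=.
  move=> Uxi; exists (Defs.shift a xi); last exact: shiftK.
  by rewrite npts_shift cube01_box preimage_subp_box add0p.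
by move=> [eta Ueta <-]; rewrite npts_shift preimage_subp_box addpN -cube01_box.
Qed.

Lemma stationary_integral_box (a : pt R d) (f : \bar R -> \bar R) :
  measurable_fun [set: \bar R] f -> (forall x, (0 <= f x)%E) ->
  (\int[P]_xi f (npts xi (box a)) = \int[P]_xi f (npts xi (@cube01 R d)))%E.
Proof.
move=> mf f0.
pose X : {RV P >-> \bar R} := HB.pack (fun xi : configT R d => npts xi (box a))
  (isMeasurableFun.Build _ _ _ _ _
     (measurable_npts (box_measurable a) (box_bounded a))).
pose X0 : {RV P >-> \bar R} := HB.pack (fun xi : configT R d => npts xi (@cube01 R d))
  (isMeasurableFun.Build _ _ _ _ _
     (measurable_npts cube01_measurable cube01_bounded)).
rewrite -(ge0_integral_distribution X mf f0) -(ge0_integral_distribution X0 mf f0).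
apply: eq_measure_integral => A mA _.
exact: stationary_npts_box.
Qed.

Lemma integral_npts_boxes (K : finType) (a : K -> pt R d) (C c p : R) :
  0 <= C -> 0 <= c ->
  (\int[P]_xi (C%:E * (npts xi (@cube01 R d) `^ p
                       + c%:E * \sum_k npts xi (box (a k)) `^ p))
   = (C * (1 + c * #|K|%:R))%:E * rho P p)%E.
Proof.
move=> C0 c0.
have mpow (B : set (pt R d)) : measurable B -> boundedp B ->
    measurable_fun [set: configT R d] (fun xi => npts xi B `^ p)%E.
  by move=> mB bB; exact: measurableT_comp (measurable_poweR p) (measurable_npts mB bB).
have pow_ge0 (B : set (pt R d)) xi : (0 <= npts xi B `^ p)%E by exact: poweR_ge0.
have msum : measurable_fun [set: configT R d]
    (fun xi => \sum_k npts xi (box (a k)) `^ p)%E.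
  by apply: emeasurable_sum => k; exact: mpow (box_measurable _) (box_bounded _).
rewrite ge0_integralZl_EFin //; last 2 first.
- by move=> xi _; rewrite adde_ge0 // mule_ge0 // sume_ge0.
- apply: emeasurable_funD; first exact: mpow cube01_measurable cube01_bounded.
  exact: emeasurable_funM.
rewrite ge0_integralD //; last 3 first.
- exact: mpow cube01_measurable cube01_bounded.
- by move=> xi _; rewrite mule_ge0 // sume_ge0.
- exact: emeasurable_funM.
rewrite ge0_integralZl_EFin //; last by move=> xi _; rewrite sume_ge0.
rewrite ge0_integral_sum //; last by move=> k; exact: mpow (box_measurable _) (box_bounded _).
rewrite (eq_bigr (fun=> rho P p)) /=; last first.
  move=> k _; apply: (@stationary_integral_box _ (fun x => x `^ p)%E).
    exact: measurable_poweR.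
  by move=> x; exact: poweR_ge0.
have -> : \sum_(k : K) rho P p = (#|K|%:R%:E * rho P p)%E.
  by rewrite sumr_const mule_natl.
rewrite muleA -EFinM.
rewrite -[X in (_ * (X + _))%E]mul1e -ge0_muleDl ?lee_fin ?mulr_ge0 //.
by rewrite muleA -EFinD -EFinM.
Qed.

End stationarity.

Section palm_bound.
Context {R : realType} {d : nat}.
Local Notation pt := (pt R d).
Implicit Types (xi : config R d) (g : R).

Lemma palm_sum_le_grid xi L z g : 0 < g ->
  (\esum_(x in cpts xi `&` @cube01 R d) npts (Defs.shift x xi) (Lambda L z) `^ g
   <= npts xi (@cube01 R d) *
      (\sum_(k : grid d L) npts xi (box (grid_corner z k))) `^ g)%E.
Proof.
move=> g0; rewrite [in X in (_ <= X * _)%E]/npts -esum_cst; last 2 first.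
- exact: cpts_lf cube01_bounded.
- exact: poweR_ge0.
apply: le_esum => x [_ x01]; apply: (gt0_ler_poweR (ltW g0)).
- by rewrite in_itv /= npts_ge0 leey.
- by rewrite in_itv /= leey andbT sume_ge0 // => k _; exact: npts_ge0.
rewrite npts_shift; apply: npts_le_sum_cover; exact: Lambda_shift_sub_grid.
Qed.

Lemma npts_mul_powR_sum_le (K : finType) (A : set pt) (B : K -> set pt) xi g :
  (0 < #|K|)%N -> 0 < g -> boundedp A -> (forall k, boundedp (B k)) ->
  (npts xi A * (\sum_k npts xi (B k)) `^ g
   <= (#|K|%:R `^ g / (1 + g))%:E *
      (npts xi A `^ (1 + g) + (g / #|K|%:R)%:E * \sum_k npts xi (B k) `^ (1 + g)))%E.
Proof.
move=> K0 g0 bA bB; rewrite npts_count //.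
under eq_bigr do rewrite npts_count //.
rewrite sumEFin.
under [X in (_ <= _ * (_ + _ * X))%E]eq_bigr do rewrite npts_count // poweR_EFin.
rewrite sumEFin !poweR_EFin -!EFinM lee_fin.
exact: mul_powR_sum_le.
Qed.

End palm_bound.

Theorem lemma8p2 (R : realType) (d : nat) (P : probability (configT R d) R)
  (Pstat : stationary P)
  (m : R) (m_pos : 0 < m)
  (intensity : (\int[P]_xi npts xi (@cube01 R d))%E = m%:E)
  (gamma : R) (gamma_pos : 0 < gamma) (L : nat) (z : pt R d) :
  (palmE P m (fun xi => npts xi (Lambda L z) `^ gamma)
   <= (m^-1 * ((2 * L%:R + 2) `^ (d%:R * gamma)))%:E * rho P (1 + gamma))%E.
Proof.
have g0 := gamma_pos; have p0 : 0 < 1 + gamma by rewrite addr_gt0.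
have K0 : (0 < #|grid d L|)%N by rewrite card_ffun !card_ord expn_gt0.
set N : R := #|grid d L|%:R.
have N0 : 0 < N by rewrite ltr0n.
rewrite /palmE; apply: le_trans.
  apply: lee_wpmul2l; first by rewrite lee_fin invr_ge0 ltW.
  apply: (@ge0_le_integral_nonmeasurable _ _ _ _ _ (fun xi : configT R d =>
    (N `^ gamma / (1 + gamma))%:E * (npts xi (@cube01 R d) `^ (1 + gamma)
      + (gamma / N)%:E * \sum_(k : grid d L) npts xi (box (grid_corner z k)) `^ (1 + gamma)))%E).
    by move=> xi; apply: esum_ge0 => x _; exact: poweR_ge0.
  move=> xi; apply: le_trans (palm_sum_le_grid _ _ _ g0) _.
  apply: npts_mul_powR_sum_le => //; [exact: cube01_bounded | move=> k; exact: box_bounded].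
rewrite (integral_npts_boxes Pstat) ?divr_ge0 ?powR_ge0 ?(ltW g0) ?(ltW p0) //.
rewrite muleA -EFinM; apply: lee_wpmul2r.
  by apply: integral_ge0 => xi _; exact: poweR_ge0.
rewrite lee_fin ler_wpM2l ?invr_ge0 ?(ltW m_pos) // -/N.
rewrite divfK ?lt0r_neq0 // mulrAC -mulrA divff ?mulr1 ?lt0r_neq0 //.
exact: card_grid_powR_le (ltW g0).
Qed.
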